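(* Let $k,n\in\mathbb N^+$ and $\mathbf C=(c_0,\dots,c_k)\in\{0,1\}^{k+1}$. For every integer $m$ with $1\le m\le n$, $$O_{\mathbf C}(n,m+c_k-1)=(n-1)!^k\sum_{\substack{J\subseteq\{2,\dots,n\}\\ |J|=m-1}}\ \prod_{j\in J}F_j(\mathbf C)\prod_{j\in\{2,\dots,n\}\setminus J}F_j(\mathbf C'),$$ and for every integer $m\ge 0$ with $m=0$ or $m>n$, $O_{\mathbf C}(n,m+c_k-1)=0$.
   Context: Fix integers $k\ge 1$, $n\ge 1$ and a vector $\mathbf C=(c_0,c_1,\dots,c_k)\in\{0,1\}^{k+1}$; put $\mathbf C'=(1,\dots,1)-\mathbf C=(c'_0,\dots,c'_k)$. Consider $k$-tuples $(\pi_1,\dots,\pi_k)$ of permutations of $\{1,\dots,n\}$ (there are $n!^k$ of them). A position $\alpha\in\{1,\dots,n\}$ is a record of a permutation $\pi$ if $\pi(\alpha)<\pi(\alpha')$ for every $\alpha'<\alpha$ (so position $1$ is always a record); equivalently, the records index the unique minimum-cardinality subset of the points $\{(\alpha,\pi(\alpha))\}$ such that every point either lies in it or is strictly dominated in both coordinates by one of its points (the ''optimization set'' for the relation $(<,<)$). For a tuple, let $l_\alpha$ be the number of $\beta\in\{1,\dots,k\}$ for which $\alpha$ is a record of $\pi_\beta$ (so $l_1=k$). The $\mathbf C$ sequential optimization set of the tuple is $S=\{\alpha: c_{l_\alpha}=1\}$, and its weight is $|S|$. For an integer $m$, the $\mathbf C$ sequential optimization number $O_{\mathbf C}(n,m)$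 is the number of $k$-tuples whose weight equals $m$ (so $O_{\mathbf C}(n,m)=0$ if $m<0$ or $m>n$). For $j\ge 2$ and $X=(x_0,\dots,x_k)\in\mathbb R^{k+1}$ set $F_j(X)=\sum_{\beta=0}^k\binom{k}{\beta}\frac{x_\beta}{(j-1)^\beta}$. Empty products equal $1$. *)

From mathcomp Require Import all_boot all_order fingroup perm all_algebra.
Set Implicit Arguments. Unset Strict Implicit. Unset Printing Implicit Defensive.
Import Order.TTheory GRing.Theory Num.Theory.

(* Positions {1..n} are encoded as 'I_n = {0..n-1}; permutations of {1..n} as 'S_n.
   Position a is a record of p iff p a < p a' for every earlier position a'. *)
Definition is_record (n : nat) (p : 'S_n) (a : 'I_n) : bool :=
  [forall a' : 'I_n, (a' < a)%N ==> (p a < p a')%N].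

Definition nrec (k n : nat) (t : {ffun 'I_k -> 'S_n}) (a : 'I_n) : nat :=
  #|[set b : 'I_k | is_record (t b) a]|.

Definition seqopt_set (k n : nat) (c : 'I_k.+1 -> bool) (t : {ffun 'I_k -> 'S_n})
  : {set 'I_n} :=
  [set a : 'I_n | c (inord (nrec t a))].

(* O_C(n,m), for an integer m (zero when m < 0 or m > n automatically). *)
Definition Onum (k n : nat) (c : 'I_k.+1 -> bool) (m : int) : nat :=
  #|[set t : {ffun 'I_k -> 'S_n} | Posz #|seqopt_set c t| == m]|.

Definition Fj (k j : nat) (x : 'I_k.+1 -> rat) : rat :=
  (\sum_(b < k.+1) ('C(k, b))%:R * x b / ((j.-1)%:R ^+ b))%R.

Definition vecC (k : nat) (c : 'I_k.+1 -> bool) : 'I_k.+1 -> rat :=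
  fun b => (nat_of_bool (c b))%:R%R.
Definition vecC' (k : nat) (c : 'I_k.+1 -> bool) : 'I_k.+1 -> rat :=
  fun b => (1 - (nat_of_bool (c b))%:R)%R.

From mathcomp Require Import all_boot all_order fingroup perm all_algebra.
From mathcomp Require Import zify ring.
Import Order.TTheory GRing.Theory Num.Theory.
Set Implicit Arguments. Unset Strict Implicit. Unset Printing Implicit Defensive.

(* The Lehmer code, sending a permutation p to the numbers
   #{a' < a | p a' < p a}, is a bijection from the permutations of {1..n}
   onto the product of the ranges {0..a-1}, and a is a record of p exactly
   when its code vanishes.  So a k-tuple of permutations amounts to choosing
   independently, at every position j, k codes in {0..j-1}; l_j is their
   number of zeros.  Exactly 'C(k,b) (j-1)^(k-b) choices have b zeros, hence
   for j >= 2 there are (j-1)^k F_j(C) choices putting j in the optimization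
   set and (j-1)^k F_j(C') leaving it out.  Position 1 has l_1 = k, so it
   contributes c_k to the weight, and summing over the set J of positions
   j >= 2 in the optimization set gives the formula, with
   prod_(j=2..n) (j-1)^k = (n-1)!^k. *)

Lemma card_ord_lt n v : v <= n -> #|[set i : 'I_n | i < v]| = v.
Proof.
move=> le_vn; have widen_inj : injective (widen_ord le_vn).
  by move=> i j /(congr1 val) eq_ij; apply: val_inj.
rewrite -[RHS](card_ord v) -(card_imset _ widen_inj).
apply: eq_card => i; rewrite inE; apply/idP/imsetP => [lt_iv|[j _ ->]].
  by exists (Ordinal lt_iv) => //; apply: val_inj.
exact: ltn_ord j.
Qed.

Section LehmerCode.

Variable n : nat.
Implicit Types (p q : 'S_n) (a i j : 'I_n).

Definition lehmer_set p a := [set i : 'I_n | (i < a) && (p i < p a)].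

Definition lehmer p a := #|lehmer_set p a|.

Lemma lehmer_le p a : lehmer p a <= a.
Proof.
rewrite /lehmer -[X in _ <= X](card_ord_lt (ltnW (ltn_ord a))).
by apply: subset_leq_card; apply/subsetP => i; rewrite !inE => /andP[].
Qed.

Lemma is_record_lehmer p a : is_record p a = (lehmer p a == 0).
Proof.
rewrite cards_eq0; apply/forallP/eqP => [rec_a | /setP lehmer0 i].
  apply/setP => i; rewrite !inE; case: ltnP => //= lt_ia.
  by rewrite ltnNge ltnW // (implyP (rec_a i)).
apply/implyP => lt_ia; have := lehmer0 i; rewrite !inE lt_ia /= => /negbT.
rewrite -leqNgt leq_eqVlt => /orP[/eqP/val_inj/perm_inj eq_ai|//].
by move: lt_ia; rewrite eq_ai ltnn.
Qed.

Lemma perm_ltNgt p i j : i != j -> (p j < p i) = ~~ (p i < p j).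
Proof.
by move=> neq_ij; rewrite ltnNge leq_eqVlt negb_or val_eqE (inj_eq perm_inj) neq_ij.
Qed.

Lemma card_perm_lt p i : #|[set j | p j < p i]| = p i.
Proof.
rewrite -[RHS](card_ord_lt (ltnW (ltn_ord (p i)))).
rewrite -(card_preimset [set v : 'I_n | v < p i] (@perm_inj _ p)).
by apply: eq_card => j; rewrite !inE.
Qed.

Definition agree_below p q (j : nat) :=
  {in [pred i : 'I_n | i < j] &, forall i1 i2, (p i1 < p i2) = (q i1 < q i2)}.

(* The positions before [j] smaller than [j] form an initial segment of an
   order shared by [p] and [q], hence are determined by their number. *)
Lemma lehmer_set_sub p q j : agree_below p q j -> lehmer p j = lehmer q j ->
  lehmer_set p j \subset lehmer_set q j.
Proof.
move=> agree eq_pq; apply/subsetP => i; rewrite !inE => /andP[lt_ij lt_pij].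
rewrite lt_ij /=; apply: contraT; rewrite -perm_ltNgt ?neq_ltn ?lt_ij // => lt_qji.
suff : lehmer q j < lehmer p j by rewrite eq_pq ltnn.
rewrite [lehmer p j](cardsD1 i) !inE lt_ij lt_pij ltnS; apply: subset_leq_card.
apply/subsetP => x; rewrite !inE => /andP[lt_xj lt_qxj].
have lt_pxi : p x < p i by rewrite agree ?inE // (ltn_trans lt_qxj).
rewrite lt_xj (ltn_trans lt_pxi lt_pij) !andbT.
by apply: contraTneq lt_pxi => ->; rewrite ltnn.
Qed.

Lemma agree_belowS p q j : agree_below p q j -> lehmer p j = lehmer q j ->
  agree_below p q j.+1.
Proof.
move=> agree eq_pq.
have eq_set : lehmer_set p j = lehmer_set q j.
  by apply/eqP; rewrite eqEcard lehmer_set_sub //= -[#|_|]/(lehmer q j) -eq_pq.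
have agree_j i : i < j -> (p i < p j) = (q i < q j).
  by move=> lt_ij; have /setP/(_ i) := eq_set; rewrite !inE lt_ij.
move=> i1 i2; rewrite !inE !ltnS.
rewrite leq_eqVlt => /orP[/eqP/val_inj-> | lt1].
all: rewrite leq_eqVlt => /orP[/eqP/val_inj-> | lt2].
- by rewrite !ltnn.
- by rewrite !(perm_ltNgt _ (negbT (ltn_eqF lt2))) agree_j.
- exact: agree_j.
- exact: agree.
Qed.

Lemma lehmer_inj p q : lehmer p =1 lehmer q -> p = q.
Proof.
move=> eq_pq.
have agree m : m <= n -> agree_below p q m.
  elim: m => [_ i1 i2 //|m IH lt_mn].
  exact: (@agree_belowS p q (Ordinal lt_mn) (IH (ltnW lt_mn)) (eq_pq _)).
apply/permP => i; apply: val_inj; rewrite /= -card_perm_lt -(card_perm_lt q).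
by apply: eq_card => j; rewrite !inE (agree n) ?inE.
Qed.

End LehmerCode.

Section CountFamily.

Variables (T U : finType).
Implicit Types (F : T -> {set U}) (f : {ffun T -> U}).

Definition family_set F := [set f : {ffun T -> U} | [forall a, f a \in F a]].

Lemma card_family_set F : #|family_set F| = (\prod_a #|F a|)%N.
Proof.
rewrite (eq_card (B := family (fun a => mem (F a)))).
  by rewrite card_family foldrE big_map big_enum.
by move=> f; rewrite inE; apply/forallP/familyP.
Qed.

Lemma card_family_set_count F (P : T -> pred U) w :
  #|[set f in family_set F | #|[set a | P a (f a)]| == w]| =
  (\sum_(J : {set T} | #|J| == w)
     \prod_(a in J) #|F a :&: [set x | P a x]| *
     \prod_(a in ~: J) #|F a :&: [set x | ~~ P a x]|)%N.
Proof.
rewrite -sum1_card.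
rewrite (partition_big (fun f => [set a | P a (f a)]) (fun J => #|J| == w)); last first.
  by move=> f; rewrite inE => /andP[].
apply: eq_bigr => J card_J.
pose G a := F a :&: [set x | P a x == (a \in J)].
transitivity #|family_set G|.
  rewrite -sum1_card; apply: eq_bigl => f; rewrite !inE.
  apply/andP/forallP => [[/andP[/forallP famF _] /eqP SJ] a | famG].
    by rewrite /G -SJ !inE famF eqxx.
  have SJ : [set a | P a (f a)] = J.
    by apply/setP => a; have := famG a; rewrite !inE => /andP[_ /eqP].
  rewrite SJ card_J eqxx andbT; split=> //; apply/forallP => a.
  by have := famG a; rewrite inE => /andP[].
rewrite card_family_set (bigID (mem J)) /=; congr (_ * _)%N.
  by apply: eq_bigr => a aJ; apply: eq_card => x; rewrite !inE aJ eqb_id.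
apply: eq_big => [a | a /negbTE aJ]; first by rewrite inE.
by apply: eq_card => x; rewrite !inE aJ eqbF_neg.
Qed.

Lemma card_family_set_const (B Z : {set U}) w :
  #|[set f in family_set (fun=> B) | #|[set a | f a \in Z]| == w]| =
  ('C(#|T|, w) * (#|B :&: Z| ^ w * #|B :\: Z| ^ (#|T| - w)))%N.
Proof.
rewrite (card_family_set_count _ (fun=> mem Z)) -card_draws -sum_nat_const.
apply: eq_big => [J | J /eqP card_J]; first by rewrite inE.
rewrite !prod_nat_const (cardsCs (~: J)) setCK card_J; congr (_ ^ _ * _ ^ _)%N.
  by apply: eq_card => x; rewrite !inE.
by apply: eq_card => x; rewrite !inE andbC.
Qed.

Lemma card_family_set_const_pred (B Z : {set U}) (Q : pred nat) :
  #|[set f in family_set (fun=> B) | Q #|[set a | f a \in Z]|]| =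
  (\sum_(w < #|T|.+1)
     Q w * ('C(#|T|, w) * (#|B :&: Z| ^ w * #|B :\: Z| ^ (#|T| - w))))%N.
Proof.
pose nZ (f : {ffun T -> U}) : 'I_#|T|.+1 := inord #|[set a | f a \in Z]|.
rewrite -sum1_card (partition_big nZ predT) //=; apply: eq_bigr => w _.
rewrite -card_family_set_const -[X in _ = _ * X]sum1_card.
have nZE f : (nZ f == w) = (#|[set a | f a \in Z]| == w).
  by rewrite -val_eqE /= inordK // ltnS max_card.
case: (boolP (Q w)) => [Qw | /negbTE nQw]; rewrite ?mul1n ?mul0n.
  by apply: eq_bigl => f; rewrite !inE nZE; case: eqP => [->|]; rewrite ?Qw ?andbF ?andbT.
by apply: big_pred0 => f; rewrite !inE nZE; case: eqP => [->|]; rewrite ?nQw ?andbF.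
Qed.

End CountFamily.

Lemma card_box_zeros_pred k N u (Q : pred nat) : u <= N ->
  #|[set g in family_set (fun=> [set x : 'I_N.+1 | x <= u]) |
       Q #|[set b : 'I_k | g b == ord0]|]| =
  (\sum_(w < k.+1) Q w * ('C(k, w) * u ^ (k - w)))%N.
Proof.
move=> le_uN.
have card_B : #|[set x : 'I_N.+1 | x <= u]| = u.+1.
  by rewrite -(@card_ord_lt N.+1 u.+1 le_uN); apply: eq_card => x; rewrite !inE.
have card_B0 : #|[set x : 'I_N.+1 | x <= u] :&: [set ord0]| = 1.
  by rewrite (setIidPr _) ?cards1 // sub1set inE.
have card_B' : #|[set x : 'I_N.+1 | x <= u] :\ ord0| = u.
  by move: card_B; rewrite (cardsD1 ord0) inE add1n => -[].
have := card_family_set_const_pred 'I_k [set x : 'I_N.+1 | x <= u] [set ord0] Q.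
rewrite card_ord card_B0 card_B'; under eq_bigr do rewrite exp1n mul1n.
move=> <-; apply: eq_card => g; rewrite !inE; congr (_ && Q _).
by apply: eq_card => b; rewrite !inE.
Qed.

Lemma Fj_scale k u (x : 'I_k.+1 -> rat) : (0 < u)%N ->
  ((u ^ k)%:R * Fj u.+1 x = \sum_(w < k.+1) x w * ('C(k, w) * u ^ (k - w))%:R)%R.
Proof.
move=> u_gt0; rewrite /Fj mulr_sumr; apply: eq_bigr => w _.
have u_unit : (u%:R : rat) \is a GRing.unit by rewrite unitfE pnatr_eq0 -lt0n.
by rewrite /= natrM !natrX (@exprB _ k w _ (ltn_ord w) u_unit); ring.
Qed.

Lemma prodr_factor_setC (I : finType) (R : comPzSemiRingType) (J : {set I})
    (x y z : I -> R) :
  (\prod_(i in J) (x i * y i) * \prod_(i in ~: J) (x i * z i) =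
   \prod_i x i * (\prod_(i in J) y i * \prod_(i in ~: J) z i))%R.
Proof.
rewrite !big_split /= mulrACA [(\prod_i x i)%R](bigID (mem J)) /=.
by congr (_ * _ * _)%R; apply: eq_bigl => i; rewrite inE.
Qed.

Lemma reindex_subsets (T T' : finType) (R : comPzSemiRingType) (h : T -> T')
    (S : pred T') (y z : T' -> R) w :
  injective h -> h @: setT = [set j | S j] ->
  (\sum_(J' : {set T'} | (J' \subset [set j | S j]) && (#|J'| == w))
     (\prod_(j in J') y j * \prod_(j | S j && (j \notin J')) z j) =
   \sum_(J : {set T} | #|J| == w)
     (\prod_(i in J) y (h i) * \prod_(i in ~: J) z (h i)))%R.
Proof.
move=> inj_h h_onto.
have imS j : S j = (j \in h @: setT) by rewrite h_onto inE.
have inj_hJ (J : {set T}) : {in J &, injective h} by move=> i1 i2 _ _ /inj_h.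
have preimK (J' : {set T'}) : J' \subset [set j | S j] -> h @: (h @^-1: J') = J'.
  move=> /subsetP sub_J'; apply/setP => j.
  apply/imsetP/idP => [[i + ->] | jJ']; first by rewrite inE.
  have := sub_J' j jJ'; rewrite inE imS => /imsetP[i _ eq_j].
  by exists i; rewrite ?inE -?eq_j.
rewrite (reindex_onto (fun J : {set T} => h @: J) (fun J' => h @^-1: J')) /=; last first.
  by move=> J' /andP[/preimK].
apply: eq_big => [J | J _].
  have -> : h @: J \subset [set j | S j].
    by apply/subsetP => _ /imsetP[i _ ->]; rewrite inE imS imset_f.
  have -> : h @^-1: (h @: J) = J by apply/setP => i; rewrite inE mem_imset.
  by rewrite card_imset // eqxx andbT.
rewrite big_imset //=; congr (_ * _)%R.
rewrite -(big_imset _ (inj_hJ (~: J))) /=; apply: eq_bigl => j; rewrite imS.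
apply/andP/imsetP => [[/imsetP[i _ ->] hJ] | [i iJ ->]].
  by exists i; rewrite // inE -(mem_imset _ _ inj_h).
by rewrite imset_f // (mem_imset _ _ inj_h) -in_setC.
Qed.

Lemma prod_expn_fact n e : (\prod_(i < n) i.+1 ^ e)%N = (n`! ^ e)%N.
Proof.
elim: n => [|n IH]; first by rewrite big_ord0 exp1n.
by rewrite big_ord_recr IH factS expnMn mulnC.
Qed.

Section CodeTuple.

Variables k n : nat.
Implicit Types (t : {ffun 'I_k -> 'S_n.+1}) (g : {ffun 'I_k -> 'I_n.+1}) (a : 'I_n).

(* The Lehmer codes of the k permutations at every position but the first
   (whose code is always 0): column [a] holds the codes at position
   [lift ord0 a], which lie in {0 .. a+1}. *)
Definition code_tuple t : {ffun 'I_n -> {ffun 'I_k -> 'I_n.+1}} :=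
  [ffun a => [ffun b => inord (lehmer (t b) (lift ord0 a))]].

Definition nzero g := #|[set b | g b == ord0]|.

Definition code_box a := family_set (fun _ : 'I_k => [set x : 'I_n.+1 | x <= a.+1]).

Lemma code_tupleE t a b : code_tuple t a b = lehmer (t b) (lift ord0 a) :> nat.
Proof.
by rewrite !ffunE inordK // ltnS (leq_trans (lehmer_le _ _)) // lift0.
Qed.

Lemma code_tuple_inj : injective code_tuple.
Proof.
move=> t1 t2 eq_t; apply/ffunP => b; apply: lehmer_inj => a.
case: (unliftP ord0 a) => [a' ->|->]; first by rewrite -!code_tupleE eq_t.
have lehmer0 p : lehmer p ord0 = 0 by apply/eqP; rewrite -leqn0; exact: lehmer_le.
by rewrite !lehmer0.
Qed.

Lemma card_code_box a : #|code_box a| = (a.+2 ^ k)%N.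
Proof.
by rewrite card_family_set prod_nat_const card_ord -(@card_ord_lt n.+1 a.+2) ?ltnS.
Qed.

Lemma code_tuple_onto : code_tuple @: setT = family_set code_box.
Proof.
apply/eqP; rewrite eqEcard; apply/andP; split.
  apply/subsetP => _ /imsetP[t _ ->]; rewrite inE; apply/forallP => a.
  by rewrite inE; apply/forallP => b; rewrite inE code_tupleE -lift0 lehmer_le.
rewrite card_imset; last exact: code_tuple_inj.
rewrite cardsT card_ffun card_Sn !card_ord card_family_set.
by rewrite (eq_bigr _ (fun a _ => card_code_box a)) -prod_expn_fact big_ord_recl exp1n mul1n.
Qed.

Lemma nrec_code_tuple t a : nrec t (lift ord0 a) = nzero (code_tuple t a).
Proof. by apply: eq_card => b; rewrite !inE is_record_lehmer -code_tupleE. Qed.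

Lemma card_code_box_pred (d : 'I_k.+1 -> bool) a :
  (#|code_box a :&: [set g | d (inord (nzero g))]|%:R : rat)%R =
  ((a.+1 ^ k)%:R * Fj a.+2 (fun w => (d w)%:R))%R.
Proof.
rewrite Fj_scale // -setIdE /code_box.
rewrite (card_box_zeros_pred _ (fun w => d (inord w))) // natr_sum.
by apply: eq_bigr => w _; rewrite natrM inord_val.
Qed.

End CodeTuple.

Section SequentialOptimization.

Variables (k n : nat) (c : 'I_k.+1 -> bool).
Implicit Types (t : {ffun 'I_k -> 'S_n.+1}) (g : {ffun 'I_k -> 'I_n.+1}).

Definition in_seqopt g := c (inord (nzero g)).

Definition tail_weight t := #|[set a | in_seqopt (code_tuple t a)]|.

Lemma card_seqopt_set t : #|seqopt_set c t| = c ord_max + tail_weight t.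
Proof.
have nrec0 : nrec t ord0 = k.
  rewrite /nrec -[RHS]card_ord -cardsT; apply: eq_card => b; rewrite !inE.
  by apply/forallP => i; rewrite ltn0.
rewrite (cardsD1 ord0) inE nrec0 (_ : inord k = ord_max); last exact/val_inj/inordK.
congr (_ + _); rewrite /tail_weight -[RHS](card_imset _ (@lift_inj _ ord0)).
apply: eq_card => i.
rewrite !inE; case: (unliftP ord0 i) => [a ->|->].
  rewrite eq_sym neq_lift (mem_imset _ _ (@lift_inj _ ord0)) inE.
  by rewrite /in_seqopt nrec_code_tuple.
rewrite eqxx; apply/esym/negbTE/imsetP => -[a _ eq0].
by move: (neq_lift ord0 a); rewrite -eq0 eqxx.
Qed.

Lemma tail_weight_le t : tail_weight t <= n.
Proof. by rewrite -[n]card_ord max_card. Qed.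

Lemma Onum_tail_weight m : 0 < m ->
  Onum n.+1 c (Posz m + Posz (c ord_max) - 1)%R = #|[set t | tail_weight t == m.-1]|.
Proof.
by move=> m_gt0; apply: eq_card => t; rewrite !inE card_seqopt_set; apply/eqP/eqP; lia.
Qed.

Lemma Onum_out_of_range m : (m == 0) || (n.+1 < m) ->
  Onum n.+1 c (Posz m + Posz (c ord_max) - 1)%R = 0.
Proof.
move=> m_out; apply/eqP; rewrite cards_eq0; apply/eqP/setP => t; rewrite !inE.
have := tail_weight_le t; rewrite card_seqopt_set => le_w; apply/negbTE/eqP; lia.
Qed.

Lemma Onum_code_family m : 0 < m ->
  Onum n.+1 c (Posz m + Posz (c ord_max) - 1)%R =
  #|[set D in family_set (@code_box k n) | #|[set a | in_seqopt (D a)]| == m.-1]|.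
Proof.
move=> m_gt0; rewrite Onum_tail_weight // -(card_imset _ (@code_tuple_inj k n)).
rewrite -code_tuple_onto; apply: eq_card => D; rewrite inE.
apply/imsetP/andP => [[t + ->] | [/imsetP[t _ ->] w_D]]; last by exists t; rewrite ?inE.
by rewrite inE => w_t; split; [exact: imset_f | ].
Qed.

Lemma card_code_box_seqopt (a : 'I_n) :
  (#|code_box k a :&: [set g | in_seqopt g]|%:R : rat)%R =
  ((a.+1 ^ k)%:R * Fj a.+2 (vecC c))%R.
Proof. exact: card_code_box_pred. Qed.

Lemma card_code_box_seqoptN (a : 'I_n) :
  (#|code_box k a :&: [set g | ~~ in_seqopt g]|%:R : rat)%R =
  ((a.+1 ^ k)%:R * Fj a.+2 (vecC' c))%R.
Proof.
rewrite (card_code_box_pred (fun w => ~~ c w)); congr (_ * _)%R.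
by apply: eq_bigr => w _; rewrite /vecC'; case: (c w).
Qed.

End SequentialOptimization.

Lemma lift2_onto n :
  [set lift ord0 (lift ord0 a) | a in [set: 'I_n]] = [set j : 'I_n.+2 | 2 <= j].
Proof.
apply/setP => j; rewrite inE; apply/imsetP/idP => [[a _ ->] // | le2j].
have lt_j : j - 2 < n by have := ltn_ord j; lia.
by exists (Ordinal lt_j) => //; apply: val_inj; rewrite /= /bump /=; lia.
Qed.

Lemma lift2_inj n : injective (fun a : 'I_n => lift ord0 (lift ord0 a) : 'I_n.+2).
Proof. by move=> a1 a2 /lift_inj /lift_inj. Qed.

Unset Implicit Arguments.

Theorem theorem2p1 (k n : nat) (hk : (0 < k)%N) (hn : (0 < n)%N)
    (c : 'I_k.+1 -> bool) :
  (forall m : nat, (1 <= m <= n)%N ->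
     (((@Onum k n c (Posz m + Posz (nat_of_bool (c ord_max)) - 1)%R))%:R : rat)
     = ((n.-1)`! ^ k)%:R *
       \sum_(J : {set 'I_n.+1} | (J \subset [set j : 'I_n.+1 | (2 <= j)%N])
                                  && (#|J| == m.-1))
         ((\prod_(j in J) Fj (val j) (vecC c)) *
          (\prod_(j : 'I_n.+1 | (2 <= j)%N && (j \notin J)) Fj (val j) (vecC' c))))%R
  /\
  (forall m : nat, (m == 0)%N || (n < m)%N ->
     @Onum k n c (Posz m + Posz (nat_of_bool (c ord_max)) - 1)%R = 0%N).
Proof.
case: n hn => // n _; split => [m /andP[m_gt0 _] | m]; last exact: Onum_out_of_range.
rewrite Onum_code_family // (card_family_set_count _ (fun=> in_seqopt c)) natr_sum.
under eq_bigr => J _ do rewrite natrM !natr_prod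
  (eq_bigr _ (fun a _ => card_code_box_seqopt c a))
  (eq_bigr _ (fun a _ => card_code_box_seqoptN c a)) prodr_factor_setC.
rewrite -mulr_sumr -natr_prod prod_expn_fact.
by rewrite (reindex_subsets _ _ _ (@lift2_inj n) (lift2_onto n)).
Qed.
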